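(* Let $p:\mathbb{R}^n\to\mathbb{R}$ be a nonzero polynomial of the form $$p(x)=\sum_{l\le |\alpha|\le k} c_\alpha x^\alpha,$$ where $l\ge 1$ is the lowest degree and $k\ge l$ the highest degree of $p$, i.e., $l$ (resp. $k$) is the smallest (resp. largest) integer such that some $\alpha\in\mathbb{N}^n$ with $|\alpha|=l$ (resp. $|\alpha|=k$) has $c_\alpha\neq 0$. Assume that $p(x)\le 0$ for all $x\in\mathbb{R}^n$. Then: \begin{enumerate} \item The degrees $l$ and $k$ are even, and both $p_l(x)=\sum_{|\alpha|=l}c_\alpha x^\alpha$ and $p_k(x)=\sum_{|\alpha|=k}c_\alpha x^\alpha$ are negative semi-definite. \item If a monomial $c_\alpha x^\alpha$ (with $c_\alpha\ne 0$) of $p$ contains a factor $x_i^{\alpha_i}$ whose degree $\alpha_i$ is the highest exponent of $x_i$ among all monomials of $p$, then $\alpha_i$ is even. \item If a monomial $x^\alpha$ appearing in $p_l$ (resp. $p_k$) contains a factor $x_i^{\alpha_i}$ whose degree $\alpha_i$ is the highest exponent of $x_i$ among all monomials of $p_l$ (resp. $p_k$), then $\alpha_i$ is even. \item If a monomial of $p$ has the form $c\,x_i^d$ (a single variable $x_i$ with coefficient $c$) and $d$ is either the lowest or the highest degree among the monomials of $p$ of this form (pure powers of $x_i$), then $d$ is even and $c\le 0$. \end{enumerate}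
   Context: Multi-index notation: for $\alpha=(\alpha_1,\dots,\alpha_n)\in\mathbb{N}^n$ (nonnegative integers), $x^\alpha=x_1^{\alpha_1}\cdots x_n^{\alpha_n}$ and $|\alpha|=\alpha_1+\dots+\alpha_n$. A monomial of $p$ means a term $c_\alpha x^\alpha$ with $c_\alpha\neq 0$. A function $V:\mathbb{R}^n\to\mathbb{R}$ is positive semi-definite if $V(0)=0$ and $V(x)\ge 0$ for all $x$; it is negative semi-definite if $-V$ is positive semi-definite. *)

From HB Require Import structures.
From mathcomp Require Import all_boot all_order all_algebra.
From mathcomp Require Import reals.
From mathcomp Require Import mpoly.
Set Implicit Arguments. Unset Strict Implicit. Unset Printing Implicit Defensive.
Import Order.TTheory GRing.Theory Num.Theory.
Local Open Scope ring_scope.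

Definition hpart (R : realType) (n d : nat) (p : {mpoly R[n]}) : {mpoly R[n]} :=
  \sum_(m <- msupp p | mdeg m == d) p@_m *: 'X_[m].

Definition neg_semidef (R : realType) (n : nat) (V : ('I_n -> R) -> R) : Prop :=
  V (fun _ => 0) = 0 /\ forall x, V x <= 0.

Definition pure_power (n : nat) (i : 'I_n) (m : 'X_{1..n}) : Prop :=
  forall j : 'I_n, j != i -> m j = 0%N.

Definition max_exponent (R : realType) (n : nat) (q : {mpoly R[n]}) (i : 'I_n)
  (m : 'X_{1..n}) : Prop :=
  forall m' : 'X_{1..n}, m' \in msupp q -> (m' i <= m i)%N.

(* Along a curve t |-> (t^w_1 x_1, ..., t^w_n x_n), a nonpositive polynomial p
   restricts to a nonpositive univariate polynomial whose coefficient of t^d is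
   the w-weighted homogeneous part of degree d of p, evaluated at x.  For a
   nonpositive univariate polynomial, the extreme nonzero coefficients are
   negative and sit in even degree: near 0, resp. near infinity, the extreme
   term dominates and must be nonpositive for t and -t.  Unit weights give
   part 1, the weight of the single variable x_i gives parts 2 and 3 (p_l and
   p_k are nonpositive by part 1), and the same weight at x = e_i isolates the
   pure powers of x_i for part 4.  Evenness needs a point where the relevant
   part does not vanish: a nonzero polynomial over an infinite field is
   nonzero somewhere. *)

From HB Require Import structures.
From mathcomp Require Import all_boot all_order all_algebra.
From mathcomp Require Import reals mpoly.
From mathcomp Require Import lra zify.
From Stdlib Require Import Classical.
Set Implicit Arguments. Unset Strict Implicit. Unset Printing Implicit Defensive.
Import Order.TTheory GRing.Theory Num.Theory.
Local Open Scope ring_scope.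

Lemma poly_eq0_horner (R : numDomainType) (p : {poly R}) :
  (forall t, p.[t] = 0) -> p = 0.
Proof.
move=> p0; apply: (@roots_geq_poly_eq0 _ p [seq i%:R | i <- iota 0 (size p)]).
- by apply/allP => t _; apply/eqP/p0.
- by rewrite (map_inj_uniq (mulrIn (oner_neq0 R))) iota_uniq.
- by rewrite size_map size_iota.
Qed.

Section NonpositivePolynomial.
Variable R : realFieldType.
Implicit Types (Q S T : {poly R}) (t : R).

Lemma horner_norm_le_sum T t :
  `|t| <= 1 -> `|T.[t]| <= \sum_(i < size T) `|T`_i|.
Proof.
move=> t_le1; rewrite horner_coef; apply: le_trans (ler_norm_sum _ _ _) _.
apply: ler_sum => i _; rewrite normrM normrX ler_piMr //.
exact: exprn_ile1.
Qed.

Lemma poly_sign_near0 S :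
  S`_0 != 0 -> exists2 r, 0 < r & forall t, `|t| <= r -> 0 < S`_0 * S.[t].
Proof.
move=> c_neq0; set c := S`_0; set T := drop_poly 1 S.
have SE t : S.[t] = c + t * T.[t].
  have take1 : take_poly 1 S = c%:P.
    by apply/polyP => -[|i]; rewrite coef_take_poly coefC.
  by rewrite -[in LHS](poly_take_drop 1 S) take1 hornerD hornerC hornerMX mulrC.
set M := \sum_(i < size T) `|T`_i|.
have M_ge0 : 0 <= M by apply: sumr_ge0.
have c_gt0 : 0 < `|c| by rewrite normr_gt0.
(* [r] is at most 1 and [r * M < |c|], so [t * T.[t]] cannot beat [c]. *)
exists (`|c| / (`|c| + M + 1)); first by rewrite divr_gt0 //; lra.
move=> t t_le; have den_gt0 : 0 < `|c| + M + 1 by lra.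
have t_le1 : `|t| <= 1.
  by apply: le_trans t_le _; rewrite ler_pdivrMr // mul1r; lra.
have tM_lt : `|t| * M < `|c|.
  apply: le_lt_trans (_ : `|c| / (`|c| + M + 1) * M < `|c|).
    by rewrite ler_wpM2r.
  by rewrite mulrAC ltr_pdivrMr //; nra.
have tT_lt : `|t * T.[t]| < `|c|.
  rewrite normrM; apply: le_lt_trans tM_lt.
  by rewrite ler_wpM2l // horner_norm_le_sum.
have c_sqr : c * c = `|c| * `|c| by rewrite -normrM ger0_norm // -expr2 sqr_ge0.
have ctT_le := ler_norm (- (c * (t * T.[t]))); rewrite normrN normrM in ctT_le.
by rewrite SE mulrDr; nra.
Qed.

Lemma poly_nonpos_lowest_coef Q j :
  (forall t, t != 0 -> Q.[t] <= 0) -> (forall d, (d < j)%N -> Q`_d = 0) ->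
  Q`_j != 0 -> Q`_j < 0 /\ ~~ odd j.
Proof.
move=> Q_nonpos Q_low cj_neq0; set c := Q`_j; set S := drop_poly j Q.
have QE t : Q.[t] = t ^+ j * S.[t].
  have take0 : take_poly j Q = 0.
    by apply/polyP => d; rewrite coef_take_poly coef0; case: ltnP => // /Q_low.
  by rewrite -[in LHS](poly_take_drop j Q) take0 add0r hornerM hornerXn mulrC.
have S0 : S`_0 = c by rewrite coef_drop_poly.
have [r r_gt0] : exists2 r, 0 < r & forall t, `|t| <= r -> 0 < c * S.[t].
  by rewrite -S0; apply: poly_sign_near0; rewrite S0.
move=> S_sign.
have rj_gt0 : 0 < r ^+ j by apply: exprn_gt0.
have Sr : 0 < c * S.[r] by apply: S_sign; rewrite gtr0_norm.
have Smr : 0 < c * S.[- r] by apply: S_sign; rewrite normrN gtr0_norm.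
have Qr : Q.[r] <= 0 by apply: Q_nonpos; rewrite gt_eqF.
have Qmr : Q.[- r] <= 0 by apply: Q_nonpos; rewrite oppr_eq0 gt_eqF.
rewrite !QE in Qr Qmr.
have c_lt0 : c < 0 by nra.
split=> //; apply/negP => j_odd.
by rewrite exprNn -signr_odd j_odd expr1 mulN1r mulNr in Qmr; nra.
Qed.

(* The reversal [t^(2D) Q(1/t)] moves the top coefficient of [Q] to the
   bottom. *)
Lemma poly_nonpos_top_coef Q D :
  (forall t, Q.[t] <= 0) -> (forall d, (D < d)%N -> Q`_d = 0) ->
  Q`_D != 0 -> Q`_D < 0 /\ ~~ odd D.
Proof.
move=> Q_nonpos Q_high cD_neq0.
pose P : {poly R} := \sum_(i < D.+1) Q`_i *: 'X^(D + D - i).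
have P_low d : (d < D)%N -> P`_d = 0.
  move=> lt_dD; rewrite coef_sumMXn big_pred0 // => i /=.
  by apply/negbTE; have := ltn_ord i; lia.
have PD : P`_D = Q`_D.
  rewrite coef_sumMXn (big_pred1 ord_max) // => i /=.
  by rewrite -val_eqE /=; have := ltn_ord i; lia.
have P_nonpos t : t != 0 -> P.[t] <= 0.
  move=> t_neq0; have size_Q : (size Q <= D.+1)%N.
    by apply/leq_sizeP => d /Q_high.
  suff -> : P.[t] = t ^+ (D + D) * Q.[t^-1].
    by rewrite mulr_ge0_le0 // exprD -expr2 sqr_ge0.
  rewrite (horner_coef_wide _ size_Q) mulr_sumr horner_sum.
  apply: eq_bigr => i _.
  rewrite hornerZ hornerXn exprB ?unitfE //; last by have := ltn_ord i; lia.
  by rewrite exprVn mulrCA.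
by rewrite -PD; apply: poly_nonpos_lowest_coef; rewrite ?PD.
Qed.

End NonpositivePolynomial.

Section RestrictMpoly.
Variables (R : comNzRingType) (n : nat).
Implicit Types (P : pred 'X_{1..n}) (q : {mpoly R[n]}) (m : 'X_{1..n}).
Implicit Types (x : 'I_n -> R) (w : 'I_n -> nat).

Definition mrestrict (P : pred 'X_{1..n}) q : {mpoly R[n]} :=
  \sum_(m <- msupp q | P m) q@_m *: 'X_[m].

Lemma big_msupp_mcoeff_delta q m0 :
  \sum_(m <- msupp q) q@_m * (m == m0)%:R = q@_m0.
Proof.
rewrite [in RHS](mpolyE q) raddf_sum /=.
by apply: eq_bigr => m _; rewrite mcoeffZ mcoeffX.
Qed.

Lemma mcoeff_mrestrict P q m0 :
  (mrestrict P q)@_m0 = if P m0 then q@_m0 else 0.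
Proof.
rewrite raddf_sum /=; under eq_bigr do rewrite mcoeffZ mcoeffX.
case: ifP => P_m0; last first.
  by apply: big1 => m P_m; case: eqVneq P_m => [->|_]; rewrite ?P_m0 ?mulr0.
rewrite -big_msupp_mcoeff_delta big_mkcond /=; apply: eq_bigr => m _.
by case: eqVneq => [->|_]; rewrite ?P_m0 ?mulr0 ?if_same.
Qed.

Lemma mrestrict_eq0 P q : {in msupp q, forall m, ~~ P m} -> mrestrict P q = 0.
Proof.
move=> notP; rewrite /mrestrict big1_seq // => m /andP[P_m /notP].
by rewrite P_m.
Qed.

Lemma mrestrict_neq0 P q m : m \in msupp q -> P m -> mrestrict P q != 0.
Proof.
move=> m_supp P_m; apply: contraTneq m_supp => q0.
have := mcoeff_mrestrict P q m; rewrite P_m q0 mcoeff0 => q_m0.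
by rewrite mcoeff_msupp -q_m0 eqxx.
Qed.

Lemma eq_mrestrict (P1 P2 : pred 'X_{1..n}) q :
  P1 =1 P2 -> mrestrict P1 q = mrestrict P2 q.
Proof. by move=> eqP12; apply: eq_bigl. Qed.

Lemma mrestrictI P1 P2 q :
  mrestrict P1 (mrestrict P2 q) = mrestrict (predI P1 P2) q.
Proof.
apply/mpolyP => m; rewrite !mcoeff_mrestrict /=.
by case: (P1 m); case: (P2 m).
Qed.

Lemma meval_mrestrict x P q :
  meval x (mrestrict P q) = \sum_(m <- msupp q | P m) q@_m * \prod_i x i ^+ m i.
Proof.
rewrite (big_morph _ (mevalD x) (meval0 x)).
by apply: eq_bigr => m _; rewrite mevalZ mevalX.
Qed.

Lemma meval_zero q : meval (fun _ => 0) q = q@_0.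
Proof.
rewrite mevalE -big_msupp_mcoeff_delta; apply: eq_bigr => m _; congr (_ * _).
case: eqVneq => [->|m_neq0]; first by apply: big1 => i _; rewrite mnm0E.
have [i mi_neq0] : exists i, m i != 0%N.
  apply/existsP; apply: contraNT m_neq0 => /existsPn mi0.
  by apply/eqP/mnmP => i; rewrite mnm0E; apply/eqP/negbNE.
by rewrite (bigD1 i) //= expr0n (negbTE mi_neq0) mul0r.
Qed.

Definition mwdeg w m := (\sum_i w i * m i)%N.

Lemma mwdeg1 m : mwdeg (fun _ => 1%N) m = mdeg m.
Proof. by rewrite mdegE; apply: eq_bigr => i _; rewrite mul1n. Qed.

Lemma mwdegU i m : mwdeg U_(i)%MM m = m i.
Proof.
rewrite /mwdeg (bigD1 i) //= mnm1E eqxx mul1n big1 ?addn0 // => j.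
by rewrite mnm1E eq_sym => /negbTE ->.
Qed.

Definition wpart w d q := mrestrict (fun m => mwdeg w m == d) q.

Definition mdilate w x q : {poly R} :=
  \sum_(m <- msupp q) (q@_m * \prod_i x i ^+ m i) *: 'X^(mwdeg w m).

Lemma horner_mdilate w x q t :
  (mdilate w x q).[t] = meval (fun i => t ^+ w i * x i) q.
Proof.
rewrite horner_sum mevalE; apply: eq_bigr => m _.
rewrite hornerZ hornerXn -mulrA; congr (_ * _).
under [RHS]eq_bigr do rewrite exprMn -exprM.
by rewrite big_split /= prodrXr mulrC.
Qed.

Lemma coef_mdilate w x q d : (mdilate w x q)`_d = meval x (wpart w d q).
Proof.
rewrite coef_sumMXn meval_mrestrict.
by apply: eq_bigl => m.
Qed.

End RestrictMpoly.

Section MpolyVanishing.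
Variables (R : numDomainType) (n : nat).
Implicit Types (q : {mpoly R[n]}) (m : 'X_{1..n}).

Lemma meval_wpart_eq0 q w d :
  (forall x, meval x q = 0) -> forall x, meval x (wpart w d q) = 0.
Proof.
move=> q0 x; rewrite -coef_mdilate (_ : mdilate w x q = 0) ?coef0 //.
by apply: poly_eq0_horner => t; rewrite horner_mdilate q0.
Qed.

(* Restricting [q], one variable at a time, to the monomials that agree with
   [m] keeps it vanishing everywhere; in the end only the monomial [m] is
   left. *)
Lemma mpoly_eq0_meval q : (forall x, meval x q = 0) -> q = 0.
Proof.
move=> q0; apply/mpolyP => m; rewrite mcoeff0.
pose agree s := mrestrict (fun m' => all (fun j => m' j == m j) s) q.
have agree0 s x : meval x (agree s) = 0.
  elim: s x => [|j s IH] x; first by rewrite /agree /mrestrict -mpolyE.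
  have -> : agree (j :: s) = wpart U_(j)%MM (m j) (agree s).
    by rewrite /wpart mrestrictI; apply: eq_mrestrict => m' /=; rewrite mwdegU.
  exact: meval_wpart_eq0.
have agreeE : agree (enum 'I_n) = q@_m *: 'X_[m].
  apply/mpolyP => m'; rewrite mcoeff_mrestrict mcoeffZ mcoeffX.
  case: eqVneq => [<-|m_neq]; first by rewrite mulr1; case: allP => // -[].
  rewrite mulr0; case: allP => // agree_m; case/eqP: m_neq.
  by apply/mnmP => i; apply/esym/eqP/agree_m; rewrite mem_enum.
have := agree0 (enum 'I_n) (fun _ => 1).
by rewrite agreeE mevalZ mevalX big1 ?mulr1 // => i _; rewrite expr1n.
Qed.

Lemma mpoly_nonvanishing q : q != 0 -> exists x, meval x q != 0.
Proof.
move=> q_neq0; have : ~ forall x, meval x q = 0.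
  by move=> q0; move/eqP: q_neq0; apply; apply: mpoly_eq0_meval.
by move/not_all_ex_not => [x /eqP]; exists x.
Qed.

End MpolyVanishing.

Lemma prod_mnm1_exprn (R : comNzSemiRingType) n (i : 'I_n) (m : 'X_{1..n}) :
  \prod_j ((i == j)%:R : R) ^+ m j = (m == U_(i) *+ m i)%MM%:R.
Proof.
case: eqVneq => [m_pure|m_impure].
  apply: big1 => j _; case: eqVneq => [_|ij]; first exact: expr1n.
  by rewrite m_pure mulmnE mnm1E (negbTE ij) mul0n expr0.
have [j /andP[ij mj_neq0]] : exists j, (i != j) && (m j != 0%N).
  apply/existsP; apply: contraNT m_impure => /existsPn m_out.
  apply/eqP/mnmP => j; rewrite mulmnE mnm1E.
  by case: eqVneq (m_out j) => [->|_ /negbNE/eqP]; rewrite ?mul1n.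
by rewrite (bigD1 j) //= (negbTE ij) expr0n (negbTE mj_neq0) mul0r.
Qed.

Lemma pure_powerE n (i : 'I_n) (m : 'X_{1..n}) :
  pure_power i m <-> m = (U_(i) *+ m i)%MM.
Proof.
split=> [m_pure|-> j ij]; last by rewrite mulmnE mnm1E eq_sym (negbTE ij).
apply/mnmP => j; rewrite mulmnE mnm1E.
by case: eqVneq => [->|ij]; rewrite ?mul1n // m_pure // eq_sym.
Qed.

Section NonpositiveMpoly.
Variables (R : realFieldType) (n : nat) (q : {mpoly R[n]}).
Hypothesis q_nonpos : forall x, meval x q <= 0.
Implicit Types (m : 'X_{1..n}) (x : 'I_n -> R) (w : 'I_n -> nat).

Lemma mdilate_nonpos w x t : (mdilate w x q).[t] <= 0.
Proof. by rewrite horner_mdilate. Qed.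

Lemma meval_lowest_wpart w d x :
  (forall e, (e < d)%N -> meval x (wpart w e q) = 0) ->
  meval x (wpart w d q) != 0 -> meval x (wpart w d q) < 0 /\ ~~ odd d.
Proof.
move=> below; rewrite -coef_mdilate; apply: poly_nonpos_lowest_coef.
- by move=> t _; apply: mdilate_nonpos.
- by move=> e /below; rewrite coef_mdilate.
Qed.

Lemma meval_highest_wpart w d x :
  (forall e, (d < e)%N -> meval x (wpart w e q) = 0) ->
  meval x (wpart w d q) != 0 -> meval x (wpart w d q) < 0 /\ ~~ odd d.
Proof.
move=> above; rewrite -coef_mdilate; apply: poly_nonpos_top_coef.
- exact: mdilate_nonpos.
- by move=> e /above; rewrite coef_mdilate.
Qed.

Lemma lowest_wpart_even_nonpos w d :
  {in msupp q, forall m, (d <= mwdeg w m)%N} -> wpart w d q != 0 ->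
  ~~ odd d /\ forall x, meval x (wpart w d q) <= 0.
Proof.
move=> d_low wd_neq0.
have below x e : (e < d)%N -> meval x (wpart w e q) = 0.
  by move=> lt_ed; rewrite /wpart mrestrict_eq0 ?meval0 // => m /d_low; lia.
split.
  by have [x /(meval_lowest_wpart (below x))[]] := mpoly_nonvanishing wd_neq0.
move=> x; have [->//|wdx_neq0] := eqVneq (meval x (wpart w d q)) 0.
by case: (meval_lowest_wpart (below x) wdx_neq0) => /ltW.
Qed.

Lemma highest_wpart_even_nonpos w d :
  {in msupp q, forall m, (mwdeg w m <= d)%N} -> wpart w d q != 0 ->
  ~~ odd d /\ forall x, meval x (wpart w d q) <= 0.
Proof.
move=> d_high wd_neq0.
have above x e : (d < e)%N -> meval x (wpart w e q) = 0.
  by move=> lt_de; rewrite /wpart mrestrict_eq0 ?meval0 // => m /d_high; lia.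
split.
  by have [x /(meval_highest_wpart (above x))[]] := mpoly_nonvanishing wd_neq0.
move=> x; have [->//|wdx_neq0] := eqVneq (meval x (wpart w d q)) 0.
by case: (meval_highest_wpart (above x) wdx_neq0) => /ltW.
Qed.

Lemma max_exponent_even m i :
  m \in msupp q -> (forall m', m' \in msupp q -> (m' i <= m i)%N) ->
  ~~ odd (m i).
Proof.
move=> m_supp m_max.
have high : {in msupp q, forall m', (mwdeg U_(i)%MM m' <= m i)%N}.
  by move=> m' /m_max; rewrite mwdegU.
have nz : wpart U_(i)%MM (m i) q != 0.
  by apply: (mrestrict_neq0 m_supp); rewrite /= mwdegU.
by case: (highest_wpart_even_nonpos high nz).
Qed.

Lemma meval_unit_wpart i d :
  meval (fun j => (i == j)%:R) (wpart U_(i)%MM d q) = q@_(U_(i) *+ d)%MM.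
Proof.
rewrite meval_mrestrict -big_msupp_mcoeff_delta big_mkcond /=.
apply: eq_bigr => m _; rewrite mwdegU prod_mnm1_exprn.
case: eqVneq => [->//|mi_neq]; rewrite (_ : (m == _) = false) ?mulr0 //.
by apply: contraNF mi_neq => /eqP ->; rewrite mulmnE mnm1E eqxx mul1n.
Qed.

Lemma extreme_pure_power_even_nonpos m i :
  m \in msupp q -> pure_power i m ->
  (forall m', m' \in msupp q -> pure_power i m' -> (m i <= m' i)%N) \/
  (forall m', m' \in msupp q -> pure_power i m' -> (m' i <= m i)%N) ->
  ~~ odd (m i) /\ q@_m <= 0.
Proof.
move=> m_supp /pure_powerE m_pure extreme.
pose e : 'I_n -> R := fun j => (i == j)%:R.
have power_i d : (U_(i) *+ d)%MM i = d by rewrite mulmnE mnm1E eqxx mul1n.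
have power_pure d : pure_power i (U_(i) *+ d)%MM.
  by apply/pure_powerE; rewrite power_i.
have absent d :
    (U_(i) *+ d)%MM \notin msupp q -> meval e (wpart U_(i)%MM d q) = 0.
  by rewrite meval_unit_wpart => /memN_msupp_eq0.
have qm_neq0 : meval e (wpart U_(i)%MM (m i) q) != 0.
  by rewrite meval_unit_wpart -m_pure -mcoeff_msupp.
have [] : meval e (wpart U_(i)%MM (m i) q) < 0 /\ ~~ odd (m i).
  case: extreme => [lowest|highest].
  - apply: meval_lowest_wpart qm_neq0 => d lt_d; apply/absent/negP.
    by move=> /lowest /(_ (power_pure d)); rewrite power_i leqNgt lt_d.
  - apply: meval_highest_wpart qm_neq0 => d lt_d; apply/absent/negP.
    by move=> /highest /(_ (power_pure d)); rewrite power_i leqNgt lt_d.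
by rewrite meval_unit_wpart -m_pure => /ltW.
Qed.

End NonpositiveMpoly.

Lemma hpartE (R : realType) n d (p : {mpoly R[n]}) :
  hpart d p = wpart (fun _ => 1%N) d p.
Proof. by apply: eq_bigl => m; rewrite mwdeg1. Qed.

Theorem proposition1 (R : realType) (n : nat) (p : {mpoly R[n]}) (l k : nat) :
  p != 0 ->
  (1 <= l)%N ->
  (* l is the lowest and k the highest degree of p *)
  (exists2 m, m \in msupp p & mdeg m = l) ->
  (exists2 m, m \in msupp p & mdeg m = k) ->
  (forall m, m \in msupp p -> (l <= mdeg m <= k)%N) ->
  (* p(x) <= 0 for all x in R^n *)
  (forall x : 'I_n -> R, meval x p <= 0) ->
  [/\ (* 1. *)
      [/\ ~~ odd l, ~~ odd k,
          neg_semidef (fun x => meval x (hpart l p)) &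
          neg_semidef (fun x => meval x (hpart k p))],
      (* 2. *)
      (forall (m : 'X_{1..n}) (i : 'I_n),
          m \in msupp p -> max_exponent p i m -> ~~ odd (m i)),
      (* 3. *)
      (forall (m : 'X_{1..n}) (i : 'I_n),
          m \in msupp (hpart l p) -> max_exponent (hpart l p) i m -> ~~ odd (m i)) /\
      (forall (m : 'X_{1..n}) (i : 'I_n),
          m \in msupp (hpart k p) -> max_exponent (hpart k p) i m -> ~~ odd (m i)) &
      (* 4. *)
      (forall (m : 'X_{1..n}) (i : 'I_n),
          m \in msupp p -> pure_power i m ->
          ((forall m', m' \in msupp p -> pure_power i m' -> (m i <= m' i)%N) \/
           (forall m', m' \in msupp p -> pure_power i m' -> (m' i <= m i)%N)) ->
          ~~ odd (m i) /\ p@_m <= 0)].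
Proof.
(* [p != 0] already follows from [ml \in msupp p]. *)
move=> _ l_ge1 [ml ml_supp ml_deg] [mk mk_supp mk_deg] deg_range p_nonpos.
have l_le_k : (l <= k)%N.
  by have /andP[] := deg_range mk mk_supp; rewrite mk_deg.
have hpart_neq0 m : m \in msupp p -> hpart (mdeg m) p != 0.
  move=> m_supp; rewrite hpartE; apply: (mrestrict_neq0 m_supp).
  by rewrite /= mwdeg1.
have [l_even hl_nonpos] : ~~ odd l /\ forall x, meval x (hpart l p) <= 0.
  rewrite hpartE; apply: lowest_wpart_even_nonpos => [//|m /deg_range /andP[]|].
    by rewrite mwdeg1.
  by rewrite -hpartE -ml_deg hpart_neq0.
have [k_even hk_nonpos] : ~~ odd k /\ forall x, meval x (hpart k p) <= 0.
  rewrite hpartE; apply: highest_wpart_even_nonpos => [//|m /deg_range /andP[]|].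
    by rewrite mwdeg1.
  by rewrite -hpartE -mk_deg hpart_neq0.
have hpart_at0 d : (1 <= d)%N -> meval (fun _ => 0) (hpart d p) = 0.
  by rewrite meval_zero hpartE mcoeff_mrestrict mwdeg1 mdeg0; case: d.
split.
- by split=> //; split=> //; apply: hpart_at0 => //; apply: leq_trans l_le_k.
- exact: max_exponent_even.
- by split; apply: max_exponent_even.
- exact: extreme_pure_power_even_nonpos.
Qed.
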